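(* Fix real numbers $\alpha,\beta,\gamma,\delta$ with $\alpha\neq0$. Let $\mathscr T$ be a graph-enriched Schröder tree on a finite linear order $\ell$ with $|\ell|\ge2$, with root $r$ and $g=\bigvee\mathscr T$. Then, as an identity in $\mathbb C(x)$, $$\Phi_g(x)=\Big(\prod_{w\in\mathrm{Iv}(\mathscr T),\,w\ne r}\Gamma_{g_{\ell_w}}(x-\delta N_{rw})\,\det\big(U_\Gamma(a_w,g_w)(x-\delta N_{rw})\big)\Big)\det\big(U_\Gamma(a_r,g_r)(x)\big).$$
   Context: All graphs finite and simple. For a graph $g$ with $n$ vertices, the universal adjacency matrix is $U(g)=\alpha A(g)+\beta I_n+\gamma J_n+\delta D(g)$, where $A$ is the adjacency matrix, $D$ the diagonal degree matrix, $J_n$ the all-ones matrix. $\Phi_g(x)=\det(xI_n-U(g))$ and $\Gamma_g(x)=\mathbf 1^t(xI_n-U(g))^{-1}\mathbf 1\in\mathbb C(x)$, with $\mathbf 1$ the all-ones vector. Generalized composition: for a segmented partition $\pi=(\ell_1,\dots,\ell_k)$ of $\ell$ (nonempty consecutive segments whose concatenation is $\ell$), graphs $g_{\ell_j}$ on $\ell_j$ and a graph $h$ on $\pi$, $\bigvee_h(g_{\ell_1},\dots,g_{\ell_k})$ has vertex set $\ell$ and edges those of the $g_{\ell_j}$ plus all $\{x,y\}$, $x\in\ell_i,y\in\ell_j$, $\{\ell_i,\ell_j\}\in E(h)$. Graph-enriched Schröder tree on $\ell$: rooted plane tree with leaves the elements of $\ell$ left to right, each internal vertex having at least two children, with a graph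 $g_v$ on $\pi_v=(\ell_{v_1},\dots,\ell_{v_k})$ for each internal $v$ (children $v_1,\dots,v_k$ left to right, $\ell_u$ the leaves below $u$). $\bigvee$ of a leaf is the one-vertex graph and $\bigvee\mathscr T=\bigvee_{g_r}(\bigvee\mathscr T_{r_1},\dots,\bigvee\mathscr T_{r_k})$; $g_{\ell_u}=\bigvee\mathscr T_u$; $a_v=(g_{\ell_{v_1}},\dots,g_{\ell_{v_k}})$. For internal $v$ with $n_i=|\ell_{v_i}|$ and $N_i=\sum_{s:\{\ell_{v_s},\ell_{v_i}\}\in E(g_v)}n_s$: $D_\Gamma(a_v,g_v)(x)=\mathrm{diag}\big(1/\Gamma_{g_{\ell_{v_i}}}(x-\delta N_i)\big)_{i=1}^k$ and $U_\Gamma(a_v,g_v)(x)=-\alpha A(g_v)+\gamma I_k-\gamma J_k+D_\Gamma(a_v,g_v)(x)$ (with $A(g_v)$ indexed by $\pi_v$ in order). For non-root internal $w$ with parent $u$, $N_w=\sum_{x:\{\ell_x,\ell_w\}\in E(g_u)}|\ell_x|$, and $N_{rw}=N_{w_1}+\cdots+N_{w_m}$ along the path $r=w_0,w_1,\dots,w_m=w$. *)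

From HB Require Import structures.
From mathcomp Require Import all_boot all_order all_algebra.
Set Implicit Arguments. Unset Strict Implicit. Unset Printing Implicit Defensive.
Import Order.TTheory GRing.Theory Num.Theory.
Local Open Scope ring_scope.

(* A node carries a relation h on the indices 0..k-1 of its k children
   (the graph g_v on pi_v, whose i-th vertex is the segment l_{v_i}),
   and the list of its children, from left to right.                      *)
Inductive stree : Type :=
| SLeaf : stree
| SNode : (nat -> nat -> bool) -> seq stree -> stree.

Fixpoint nleaves (t : stree) : nat :=
  match t with
  | SLeaf => 1%N
  | SNode _ cs => sumn (map nleaves cs)
  end.

Fixpoint wf_stree (t : stree) : bool :=
  match t with
  | SLeaf => true
  | SNode h cs =>
      [&& (2 <= size cs)%N,
          [forall i : 'I_(size cs), forall j : 'I_(size cs),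
              (h i j == h j i) && ~~ h i i]
        & all wf_stree cs]
  end.

(* locate a vertex x in consecutive blocks of sizes s: (block index, offset) *)
Fixpoint locate (s : seq nat) (x : nat) : nat * nat :=
  match s with
  | [::] => (0%N, x)
  | s0 :: s' => if (x < s0)%N then (0%N, x)
                else let p := locate s' (x - s0) in (p.1.+1, p.2)
  end.

(* adjacency relation of the graph \bigvee t, on vertices 0..nleaves t - 1
   (generalized composition, recursively) *)
Fixpoint treeAdj (t : stree) : nat -> nat -> bool :=
  match t with
  | SLeaf => fun _ _ => false
  | SNode h cs =>
      let adjs := map treeAdj cs in
      let s := map nleaves cs in
      fun x y =>
        let px := locate s x in
        let py := locate s y in
        if px.1 == py.1 then nth (fun _ _ => false) adjs px.1 px.2 py.2
        else h px.1 py.1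
  end.

Fixpoint subtreeAt (t : stree) (p : seq nat) : stree :=
  match p, t with
  | [::], _ => t
  | i :: p', SNode _ cs => subtreeAt (nth SLeaf cs i) p'
  | _ :: _, SLeaf => SLeaf
  end.

(* paths of all internal vertices Iv(T) (the root is the empty path) *)
Fixpoint ipaths (t : stree) : seq (seq nat) :=
  match t with
  | SLeaf => [::]
  | SNode _ cs =>
      [::] :: flatten [seq map (cons ip.1) ip.2
                      | ip <- zip (iota 0 (size cs)) (map ipaths cs)]
  end.

Definition Nchild (h : nat -> nat -> bool) (cs : seq stree) (i : nat) : nat :=
  (\sum_(s < size cs | h s i) nleaves (nth SLeaf cs s))%N.

Fixpoint Npath (t : stree) (p : seq nat) : nat :=
  match p, t with
  | [::], _ => 0%N
  | i :: p', SNode h cs => (Nchild h cs i + Npath (nth SLeaf cs i) p')%N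
  | _ :: _, SLeaf => 0%N
  end.

Definition adjmx (R : realFieldType) (n : nat) (adj : nat -> nat -> bool) : 'M[R]_n :=
  \matrix_(i < n, j < n) (adj i j)%:R.

Definition degmx (R : realFieldType) (n : nat) (adj : nat -> nat -> bool) : 'M[R]_n :=
  diag_mx (\row_(i < n) (#|[pred j : 'I_n | adj i j]|)%:R).

Definition Umx (R : realFieldType) (alpha beta gamma delta : R)
    (n : nat) (adj : nat -> nat -> bool) : 'M[R]_n :=
  alpha *: adjmx R n adj + beta%:M + gamma *: const_mx 1 + delta *: degmx R n adj.

Definition Phi (R : realFieldType) (alpha beta gamma delta : R)
    (n : nat) (adj : nat -> nat -> bool) : {poly R} :=
  char_poly (Umx alpha beta gamma delta n adj).

Definition tof (R : realFieldType) (p : {poly R}) : {fraction {poly R}} :=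
  @FracField.tofrac _ p.
Definition cst (R : realFieldType) (a : R) : {fraction {poly R}} := tof a%:P.
Definition xF (R : realFieldType) : {fraction {poly R}} := tof 'X.

(* Gamma_g evaluated at z in R(x): 1^t (z I - U(g))^{-1} 1;
   Gamma_g(x - c) is GammaAt ... (xF - cst c) *)
Definition GammaAt (R : realFieldType) (alpha beta gamma delta : R)
    (n : nat) (adj : nat -> nat -> bool) (z : {fraction {poly R}}) : {fraction {poly R}} :=
  \sum_(i < n) \sum_(j < n)
     (invmx (z%:M - map_mx (@cst R) (Umx alpha beta gamma delta n adj))) i j.

Definition children (t : stree) : seq stree :=
  match t with SLeaf => [::] | SNode _ cs => cs end.

Definition UGam (R : realFieldType) (alpha beta gamma delta : R)
    (t : stree) (z : {fraction {poly R}}) : 'M[{fraction {poly R}}]_(size (children t)) :=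
  match t as t0 return 'M[{fraction {poly R}}]_(size (children t0)) with
  | SLeaf => 0
  | SNode h cs =>
      \matrix_(i < size cs, j < size cs)
        (cst (- alpha * (h i j)%:R + gamma * (i == j)%:R - gamma)
         + (i == j)%:R *
           (GammaAt alpha beta gamma delta (nleaves (nth SLeaf cs i)) (treeAdj (nth SLeaf cs i))
                    (z - cst (delta * (Nchild h cs i)%:R)))^-1)
  end.

(* Write M_g(z) = zI - U(g) over R(x), so that Phi_g = det M_g(x) and
   Gamma_g(z) = 1^t M_g(z)^-1 1.  Order the vertices of g = \bigvee T by the
   blocks l_i of the children of the root.  A vertex of l_i has degree in g its
   degree in g_{l_i} plus N_i, so M_g(z) = B - P C P^t, where B is block
   diagonal with blocks M_{g_{l_i}}(z - delta N_i), P is the block incidence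
   matrix and C = alpha A(g_r) + gamma (J - I).  Solving B X = P, Sylvester's
   identity det (1 - XY) = det (1 - YX) gives det M_g(z) = det B det (1 - C P^t X),
   and P^t X = diag (Gamma_i); hence
     det M_g(z) = prod_i (det M_{g_{l_i}} Gamma_{g_{l_i}})(z - delta N_i)
                  * det U_Gamma(a_r, g_r)(z).
   Starting from det M Gamma = 1 at a leaf, this unfolds det M_g Gamma_g into
   one factor Gamma det U_Gamma per internal vertex.  The Gamma_i do not vanish:
   det (M - J) = det M (1 - Gamma), so Gamma = 0 would give U and U + J the same
   characteristic polynomial, although their traces differ by n. *)

From HB Require Import structures.
From mathcomp Require Import all_boot all_order all_algebra.
From mathcomp Require Import zify ring.
Set Implicit Arguments. Unset Strict Implicit. Unset Printing Implicit Defensive.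
Import Order.TTheory GRing.Theory Num.Theory.
Local Open Scope ring_scope.

Section Locate.
Variables (T : Type) (x0 : T) (sz : T -> nat).

Lemma big_locate (R : Type) (idx : R) (op : Monoid.com_law idx) (l : seq T)
    (f : nat -> nat -> R) :
  \big[op/idx]_(x < sumn (map sz l))
      f (locate (map sz l) x).1 (locate (map sz l) x).2
  = \big[op/idx]_(i < size l) \big[op/idx]_(a < sz (nth x0 l i)) f i a.
Proof.
elim: l f => [|t l IH] f /=; first by rewrite !big_ord0.
rewrite big_split_ord big_ord_recl /=; congr (op _ _).
  by apply: eq_bigr => a _ /=; rewrite ltn_ord.
rewrite -(IH (fun i => f i.+1)); apply: eq_bigr => x _ /=.
by rewrite ltnNge leq_addr /= addKn.
Qed.

Lemma locate_bounded (l : seq T) x : (x < sumn (map sz l))%N ->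
  ((locate (map sz l) x).1 < size l)%N &&
  ((locate (map sz l) x).2 < sz (nth x0 l (locate (map sz l) x).1))%N.
Proof.
elim: l x => [|t l IH] x //=.
case: ifP => [-> //| hx hlt /=].
by apply: IH; lia.
Qed.

End Locate.

Lemma eq_locate (s : seq nat) x y : (x < sumn s)%N -> (y < sumn s)%N ->
  ((locate s x).1 == (locate s y).1) && ((locate s x).2 == (locate s y).2) = (x == y).
Proof.
rewrite -xpair_eqE -!surjective_pairing.
elim: s x y => [|s0 s IH] x y //= hx hy.
case: ifP => hx0; case: ifP => hy0 //=; rewrite ?xpair_eqE /=.
- by apply/esym/eqP; lia.
- by apply/esym/eqP; lia.
by rewrite eqSS -xpair_eqE -!surjective_pairing IH; lia.
Qed.

Lemma sylvester_det (R : comPzRingType) m n (A : 'M[R]_(m, n)) (B : 'M[R]_(n, m)) :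
  \det (1%:M - A *m B) = \det (1%:M - B *m A).
Proof.
have E1 : block_mx (1%:M - A *m B) A 0 1%:M *m block_mx 1%:M 0 B 1%:M
          = block_mx 1%:M A B 1%:M.
  by rewrite mulmx_block !mulmx1 !mul1mx !mul0mx !mulmx0 ?addr0 ?add0r subrK.
have E2 : block_mx 1%:M 0 B 1%:M *m block_mx 1%:M A 0 (1%:M - B *m A)
          = block_mx 1%:M A B 1%:M.
  by rewrite mulmx_block !mulmx1 !mul1mx !mul0mx ?mulmx0 ?addr0 ?add0r addrC subrK.
have := congr1 determinant (etrans E1 (esym E2)).
by rewrite !det_mulmx !det_ublock !det_lblock !det1 !mulr1 !mul1r.
Qed.

Lemma det_rank_update (R : comPzRingType) n k (B : 'M[R]_n) (X P : 'M[R]_(n, k))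
    (C : 'M[R]_k) (Q : 'M[R]_(k, n)) :
  B *m X = P -> \det (B - P *m C *m Q) = \det B * \det (1%:M - C *m Q *m X).
Proof.
move=> <-.
have -> : B - B *m X *m C *m Q = B *m (1%:M - X *m (C *m Q)).
  by rewrite mulmxBr mulmx1 !mulmxA.
by rewrite det_mulmx sylvester_det.
Qed.

Lemma det_1_sub_mul_diag (F : fieldType) k (C : 'M[F]_k) (g : 'I_k -> F) :
  (forall i, g i != 0) ->
  \det (1%:M - C *m diag_mx (\row_i g i))
  = (\prod_i g i) * \det (\matrix_(i, j) ((i == j)%:R * (g i)^-1 - C i j)).
Proof.
move=> g_neq0.
have -> : 1%:M - C *m diag_mx (\row_i g i)
    = \matrix_(i, j) ((i == j)%:R * (g i)^-1 - C i j) *m diag_mx (\row_i g i).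
  apply/matrixP => i j; rewrite !mul_mx_diag !mxE.
  have [<-|_] := eqVneq i j; last by rewrite !mul0r !sub0r mulNr.
  by rewrite mulrBl mul1r mulVf.
by rewrite det_mulmx det_diag mulrC; under eq_bigr do rewrite mxE.
Qed.

Definition blkmx (R : pzRingType) (T : Type) (sz : T -> nat) (l : seq T)
    (Mf : nat -> nat -> nat -> R) : 'M[R]_(sumn (map sz l)) :=
  \matrix_(x, y) (if (locate (map sz l) x).1 == (locate (map sz l) y).1
                  then Mf (locate (map sz l) x).1 (locate (map sz l) x).2
                          (locate (map sz l) y).2
                  else 0).

Lemma det_blkmx (R : comPzRingType) (T : Type) (x0 : T) (sz : T -> nat) (l : seq T)
    (Mf : nat -> nat -> nat -> R) :
  \det (blkmx sz l Mf)
  = \prod_(i < size l) \det (\matrix_(a, b < sz (nth x0 l i)) Mf i a b).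
Proof.
elim: l Mf => [|t l IH] Mf; first by rewrite det_mx00 big_ord0.
have -> : blkmx sz (t :: l) Mf =
    block_mx (\matrix_(a, b < sz t) Mf 0%N a b) 0 0 (blkmx sz l (fun i => Mf i.+1)).
  apply/matrixP => x y; rewrite -(splitK x) -(splitK y).
  by case: (split x) => x'; case: (split y) => y';
    rewrite ?(block_mxEul, block_mxEur, block_mxEdl, block_mxEdr) !mxE /=
            ?ltn_ord ?[(sz t + _ < sz t)%N]ltnNge ?leq_addr //= !addKn ?eqSS.
by rewrite det_ublock IH big_ord_recl.
Qed.

Lemma sum_row_mul_invmx_rowsum (F : fieldType) m (A : 'M[F]_m) (a : 'I_m) :
  A \in unitmx -> \sum_b A a b * \sum_c invmx A b c = 1.
Proof.
move=> /mulmxV /(congr1 (fun B : 'M_m => \sum_c B a c)).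
under eq_bigr => c _ do rewrite !mxE.
rewrite exchange_big /=; under eq_bigr => b _ do rewrite -mulr_sumr.
move=> ->; under eq_bigr => c _ do rewrite mxE mulrb eq_sym.
by rewrite -big_mkcond big_pred1_eq.
Qed.

Lemma sum_ord_pick (V : nmodType) k m (mk : (m < k)%N) (F : 'I_k -> V) :
  \sum_(j < k) (if m == j then F j else 0) = F (Ordinal mk).
Proof. by rewrite -big_mkcond (eq_bigl (pred1 (Ordinal mk))) ?big_pred1_eq. Qed.

Section BlockComposition.
Variables (F : fieldType) (T : Type) (x0 : T) (sz : T -> nat) (l : seq T).
Variables (Mf : nat -> nat -> nat -> F) (Cf : nat -> nat -> F).
Local Notation n := (sumn (map sz l)).
Local Notation k := (size l).
Local Notation loc := (locate (map sz l)).

Definition blockmx i : 'M[F]_(sz (nth x0 l i)) := \matrix_(a, b) Mf i a b.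

Definition blockGamma i : F := \sum_a \sum_b invmx (blockmx i) a b.

(* Indexed by a natural number a; out-of-range indices give 0. *)
Definition invrowsum i (a : nat) : F :=
  \sum_(a' < sz (nth x0 l i) | a' == a :> nat) \sum_b invmx (blockmx i) a' b.

Lemma invrowsumE i (a : 'I_(sz (nth x0 l i))) :
  invrowsum i a = \sum_b invmx (blockmx i) a b.
Proof. by rewrite /invrowsum (eq_bigl (pred1 a)) ?big_pred1_eq. Qed.

Definition incmx : 'M[F]_(n, k) := \matrix_(x, i) ((loc x).1 == i)%:R.

Definition invincmx : 'M[F]_(n, k) :=
  \matrix_(x, i) (((loc x).1 == i)%:R * invrowsum i (loc x).2).

Lemma incmx_conj :
  incmx *m \matrix_(i, j) Cf i j *m incmx^T = \matrix_(x, y) Cf (loc x).1 (loc y).1.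
Proof.
apply/matrixP => x y; rewrite /incmx !mxE.
have /andP [hx _] := locate_bounded x0 (ltn_ord x).
have /andP [hy _] := locate_bounded x0 (ltn_ord y).
under eq_bigr => j _ do rewrite !mxE mulr_natr mulrb.
rewrite (sum_ord_pick hy); under eq_bigr => i _ do rewrite !mxE mulr_natl mulrb.
by rewrite (sum_ord_pick hx).
Qed.

Lemma sum_block (V : nmodType) m (f : nat -> nat -> V) : (m < k)%N ->
  \sum_(x < n) (if m == (loc x).1 then f (loc x).1 (loc x).2 else 0)
  = \sum_(a < sz (nth x0 l m)) f m a.
Proof.
move=> mk; rewrite (big_locate x0 sz _ l (fun j a => if m == j then f j a else 0)).
under eq_bigr => j _.
  have -> : \sum_(a < sz (nth x0 l j)) (if m == j then f j a else 0)
          = if m == j then \sum_(a < sz (nth x0 l j)) f j a else 0.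
    by case: eqP => _ //; rewrite big1.
  over.
by rewrite (sum_ord_pick mk).
Qed.

Hypothesis blockmx_unit : forall i : 'I_k, blockmx i \in unitmx.

Lemma mul_blkmx_invincmx : blkmx sz l Mf *m invincmx = incmx.
Proof.
apply/matrixP => x i; rewrite !mxE.
have /andP [hx ox] := locate_bounded x0 (ltn_ord x).
pose g j a := Mf (loc x).1 (loc x).2 a * ((j == i :> nat)%:R * invrowsum i a).
under eq_bigr => y _.
  have -> : blkmx sz l Mf x y * invincmx y i
          = if (loc x).1 == (loc y).1 then g (loc y).1 (loc y).2 else 0.
    by rewrite !mxE; case: ifP; rewrite ?mul0r.
  over.
rewrite sum_block // /g /=.
have [bxi|_] := eqVneq (loc x).1 i; last first.
  by rewrite big1 // => a _; rewrite mul0r mulr0.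
rewrite bxi in ox *.
under eq_bigr => a _ do rewrite mulr1n mul1r invrowsumE.
rewrite -(sum_row_mul_invmx_rowsum (Ordinal ox) (blockmx_unit i)).
by apply: eq_bigr => a _; rewrite mxE.
Qed.

Lemma mul_incmxT_invincmx : incmx^T *m invincmx = diag_mx (\row_i blockGamma i).
Proof.
apply/matrixP => i j; rewrite !mxE.
under eq_bigr => x _.
  have -> : incmx^T i x * invincmx x j
          = if i == (loc x).1 :> nat then (i == j)%:R * invrowsum j (loc x).2 else 0.
    by rewrite !mxE; have [->|] := eqVneq (loc x).1 i; rewrite ?mulr1n ?mul1r ?mulr0n ?mul0r.
  over.
rewrite (sum_block (fun _ a => (i == j)%:R * invrowsum j a)) // /blockGamma.
have [<-|_] := eqVneq i j; last by rewrite /= mulr0n big1 // => a _; rewrite mulr0n mul0r.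
by rewrite /= mulr1n; apply: eq_bigr => a _; rewrite mulr1n mul1r invrowsumE.
Qed.

Hypothesis blockGamma_neq0 : forall i : 'I_k, blockGamma i != 0.

Theorem det_blkmx_sub_incmx :
  \det (blkmx sz l Mf - \matrix_(x, y) Cf (loc x).1 (loc y).1)
  = (\prod_(i < k) (\det (blockmx i) * blockGamma i))
    * \det (\matrix_(i, j < k) ((i == j)%:R * (blockGamma i)^-1 - Cf i j)).
Proof.
rewrite -incmx_conj (det_rank_update _ _ mul_blkmx_invincmx) -mulmxA.
rewrite mul_incmxT_invincmx det_1_sub_mul_diag // (det_blkmx x0) big_split mulrA.
by congr (_ * \det _); apply/matrixP => i j; rewrite !mxE.
Qed.

End BlockComposition.

HB.instance Definition _ (R : realFieldType) :=
  GRing.RMorphism.copy (@tof R) (@FracField.tofrac _).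
HB.instance Definition _ (R : realFieldType) :=
  GRing.RMorphism.copy (@cst R) (@tof R \o polyC).

Lemma sub_cstD (R : realFieldType) (z : {fraction {poly R}}) (a b : R) :
  z - cst (a + b) = z - cst a - cst b.
Proof. by rewrite rmorphD opprD addrA. Qed.

Section UniversalMatrix.
Variables (R : realFieldType) (alpha beta gamma delta : R).
Local Notation FF := {fraction {poly R}}.

Definition Uentry n (adj : nat -> nat -> bool) (a b : nat) : R :=
  alpha * (adj a b)%:R
  + (a == b)%:R * (beta + delta * #|[pred j : 'I_n | adj a j]|%:R) + gamma.

Lemma UmxE n adj : Umx alpha beta gamma delta n adj = \matrix_(a, b) Uentry n adj a b.
Proof.
apply/matrixP => a b; rewrite !mxE /Uentry -[(a == b :> nat)]/(a == b).
by have [<-|_] := eqVneq a b; rewrite ?mulr1n ?mulr0n /=; ring.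
Qed.

Definition charmx n adj (z : FF) : 'M[FF]_n :=
  z%:M - map_mx (@cst R) (Umx alpha beta gamma delta n adj).

Lemma charmxE n adj z :
  charmx n adj z = \matrix_(a, b) (z *+ (a == b) - cst (Uentry n adj a b)).
Proof. by apply/matrixP => a b; rewrite /charmx UmxE !mxE. Qed.

Lemma charmx_shift n adj (c : R) :
  charmx n adj (xF R - cst c)
  = map_mx (@tof R) (char_poly_mx (Umx alpha beta gamma delta n adj + c%:M)).
Proof.
apply/matrixP => a b; rewrite /charmx !mxE /xF /cst.
by have [_|_] := eqVneq a b;
  rewrite ?mulr1n ?mulr0n ?addr0 ?sub0r ?polyCN ?polyCD ?rmorphN ?rmorphB ?rmorphD; ring.
Qed.

Lemma det_charmx_neq0 n adj (c : R) : \det (charmx n adj (xF R - cst c)) != 0.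
Proof.
by rewrite charmx_shift det_map_mx /tof tofrac_eq0 (monic_neq0 (char_poly_monic _)).
Qed.

Lemma charmx_unit n adj (c : R) : charmx n adj (xF R - cst c) \in unitmx.
Proof. by rewrite unitmxE unitfE det_charmx_neq0. Qed.

Lemma det_charmx_subJ n adj (z : FF) : charmx n adj z \in unitmx ->
  \det (charmx n adj z - const_mx 1)
  = \det (charmx n adj z) * (1 - GammaAt alpha beta gamma delta n adj z).
Proof.
set M := charmx n adj z => unitM.
pose u : 'M[FF]_(n, 1) := const_mx 1; pose v : 'M[FF]_(1, n) := const_mx 1.
have -> : const_mx 1 = u *m 1%:M *m v.
  by apply/matrixP => a b; rewrite mulmx1 !mxE big_ord1 !mxE mulr1.
rewrite (det_rank_update (X := invmx M *m u)) ?mulmxA ?mulmxV ?mul1mx //.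
rewrite det_mx11 !mxE mulr1n; congr (_ * (_ - _)).
under eq_bigr => b _ do rewrite !mxE mulr1.
rewrite exchange_big; apply: eq_bigr => a _; apply: eq_bigr => b _.
by rewrite mxE mul1r.
Qed.

Lemma GammaAt_neq0 n adj (c : R) :
  (0 < n)%N -> GammaAt alpha beta gamma delta n adj (xF R - cst c) != 0.
Proof.
set U := Umx alpha beta gamma delta n adj => n_gt0; apply/eqP => Gamma0.
have := det_charmx_subJ (charmx_unit n adj c); rewrite Gamma0 subr0 mulr1.
have -> : charmx n adj (xF R - cst c) - const_mx 1
        = map_mx (@tof R) (char_poly_mx (U + c%:M + const_mx 1)).
  rewrite charmx_shift; apply/matrixP => a b; rewrite !mxE.
  by rewrite !polyCD !rmorphB !rmorphD polyC1 rmorph1; ring.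
rewrite charmx_shift !det_map_mx => /eqP; rewrite tofrac_eq => /eqP.
move/(congr1 (fun p : {poly R} => p`_n.-1)); rewrite !char_poly_trace //.
rewrite mxtraceD => /oppr_inj/eqP; rewrite -subr_eq0 addrC addKr.
have -> : \tr (const_mx 1 : 'M[R]_n) = n%:R.
  by rewrite /mxtrace (eq_bigr (fun _ => 1)) ?sumr_const ?card_ord // => i _; rewrite mxE.
by rewrite pnatr_eq0 eqn0Ngt n_gt0.
Qed.

Lemma Phi_det_charmx n adj :
  tof (Phi alpha beta gamma delta n adj) = \det (charmx n adj (xF R)).
Proof.
have := charmx_shift n adj 0; rewrite rmorph0 subr0 => ->.
by rewrite det_map_mx (raddf0 (@scalar_mx _ n)) addr0.
Qed.

End UniversalMatrix.

(* The induction principle generated for the nested type stree gives no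
   hypothesis on the children. *)
Fixpoint stree_nth_ind (P : stree -> Prop) (P_leaf : P SLeaf)
    (P_node : forall h cs, (forall i, (i < size cs)%N -> P (nth SLeaf cs i)) ->
              P (SNode h cs))
    (t : stree) {struct t} : P t :=
  match t with
  | SLeaf => P_leaf
  | SNode h cs => P_node h cs
      ((fix all_nth (cs : seq stree) : forall i, (i < size cs)%N -> P (nth SLeaf cs i) :=
          match cs with
          | [::] => fun i lt_i0 => False_ind _ (notF lt_i0)
          | c :: cs' => fun i => if i is i'.+1 then all_nth cs' i'
                                 else fun _ => stree_nth_ind P_leaf P_node c
          end) cs)
  end.

Section WellFormed.
Variables (h : nat -> nat -> bool) (cs : seq stree).
Hypothesis wf : wf_stree (SNode h cs).

Lemma wf_child i : (i < size cs)%N -> wf_stree (nth SLeaf cs i).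
Proof. by case/and3P: wf => _ _ /all_nthP; apply. Qed.

Lemma wf_node_graph i j : (i < size cs)%N -> (j < size cs)%N ->
  h i j = h j i /\ h i i = false.
Proof.
case/and3P: wf => _ /forallP wf_h _ lt_i lt_j.
by have /forallP /(_ (Ordinal lt_j)) /andP [/eqP sym /negbTE irr] := wf_h (Ordinal lt_i).
Qed.

End WellFormed.

Lemma nleaves_gt0 t : wf_stree t -> (0 < nleaves t)%N.
Proof.
elim/stree_nth_ind: t => [//|h cs IH] wf /=.
have /and3P [two_le _ _] := wf.
have lt_0 : (0 < size cs)%N by apply: leq_trans two_le.
move: (IH 0%N lt_0 (wf_child wf lt_0)); case: cs {IH wf two_le} lt_0 => [//|c cs] _ /=.
by rewrite addn_gt0 => ->.
Qed.

Lemma nth_treeAdj cs i :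
  nth (fun _ _ => false) (map treeAdj cs) i = treeAdj (nth SLeaf cs i).
Proof. by elim: cs i => [|c cs IH] [|i] //=. Qed.

Lemma treeAdj_node h cs x y :
  treeAdj (SNode h cs) x y =
  if (locate (map nleaves cs) x).1 == (locate (map nleaves cs) y).1
  then treeAdj (nth SLeaf cs (locate (map nleaves cs) x).1)
               (locate (map nleaves cs) x).2 (locate (map nleaves cs) y).2
  else h (locate (map nleaves cs) x).1 (locate (map nleaves cs) y).1.
Proof. by rewrite /= nth_treeAdj. Qed.

Lemma card_pred_sum m (P : pred nat) : #|[pred j : 'I_m | P j]| = (\sum_(j < m) P j)%N.
Proof.
rewrite -sum1_card big_mkcond; apply: eq_bigr => j _.
by rewrite inE; case: (P j).
Qed.

Section NodeDegree.
Variables (h : nat -> nat -> bool) (cs : seq stree).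
Hypothesis wf : wf_stree (SNode h cs).
Local Notation loc := (locate (map nleaves cs)).

Lemma deg_node (x : 'I_(nleaves (SNode h cs))) :
  #|[pred y : 'I_(nleaves (SNode h cs)) | treeAdj (SNode h cs) x y]|
  = (#|[pred b : 'I_(nleaves (nth SLeaf cs (loc x).1)) |
         treeAdj (nth SLeaf cs (loc x).1) (loc x).2 b]|
     + Nchild h cs (loc x).1)%N.
Proof.
have /andP [lt_i _] := locate_bounded SLeaf (ltn_ord x).
set i := (loc x).1 in lt_i *; set a := (loc x).2.
pose f j b := nat_of_bool (if i == j then treeAdj (nth SLeaf cs i) a b else h i j).
rewrite !card_pred_sum.
under eq_bigr => y _ do rewrite treeAdj_node -/i -/a -[nat_of_bool _]/(f (loc y).1 (loc y).2).
rewrite (big_locate SLeaf nleaves _ cs f) (bigD1 (Ordinal lt_i)) //= {1}/f eqxx.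
congr (_ + _)%N; rewrite /Nchild [RHS]big_mkcond /= [RHS](bigD1 (Ordinal lt_i)) //=.
have [_ ->] := wf_node_graph wf lt_i lt_i; rewrite add0n.
apply: eq_bigr => j ne_ji; rewrite /f.
have -> : (i == j) = false by apply/negbTE; rewrite eq_sym.
have [-> _] := wf_node_graph wf (ltn_ord j) lt_i.
by rewrite sum_nat_const card_ord; case: (h i j); rewrite ?muln1 ?muln0.
Qed.

End NodeDegree.

Lemma big_ipaths_node (V : comPzSemiRingType) h cs (P : pred (seq nat))
    (G : seq nat -> V) :
  \prod_(w <- ipaths (SNode h cs) | P w) G w
  = (if P [::] then G [::] else 1)
    * \prod_(i < size cs)
        \prod_(w <- ipaths (nth SLeaf cs i) | P (nat_of_ord i :: w)) G (nat_of_ord i :: w).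
Proof.
have flattenE m : \prod_(w <- flatten [seq map (cons ip.1) ip.2
                                       | ip <- zip (iota m (size cs)) (map ipaths cs)]
                       | P w) G w
    = \prod_(i < size cs) \prod_(w <- ipaths (nth SLeaf cs i) | P ((m + i)%N :: w))
        G ((m + i)%N :: w).
  elim: cs m {h} => [|c cs IH] m /=; first by rewrite big_nil big_ord0.
  rewrite big_cat big_map big_ord_recl addn0 IH.
  by congr (_ * _); apply: eq_bigr => i _; rewrite addSnnS.
by rewrite [ipaths _]/= big_cons flattenE; case: (P [::]); rewrite ?mul1r.
Qed.

Section TreeMatrices.
Variables (R : realFieldType) (alpha beta gamma delta : R).
Local Notation FF := {fraction {poly R}}.
Local Notation charmxT t := (charmx alpha beta gamma delta (nleaves t) (treeAdj t)).
Local Notation GammaT t := (GammaAt alpha beta gamma delta (nleaves t) (treeAdj t)).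
Local Notation loc cs := (locate (map nleaves cs)).

Definition child_entry h cs (z : FF) (i a b : nat) : FF :=
  (z - cst (delta * (Nchild h cs i)%:R)) *+ (a == b)
  - cst (Uentry alpha beta gamma delta
                (nleaves (nth SLeaf cs i)) (treeAdj (nth SLeaf cs i)) a b).

(* C = alpha A(g_v) + gamma (J - I), so that U_Gamma(a_v, g_v) = D_Gamma - C. *)
Definition coupling (h : nat -> nat -> bool) (i j : nat) : FF :=
  cst (alpha * (h i j)%:R + gamma - gamma * (i == j)%:R).

Lemma charmx_node h cs z : wf_stree (SNode h cs) ->
  charmxT (SNode h cs) z
  = blkmx nleaves cs (child_entry h cs z)
    - \matrix_(x, y) coupling h (loc cs x).1 (loc cs y).1.
Proof.
move=> wf; rewrite charmxE; apply/matrixP => x y; rewrite !mxE.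
have lt_x : (x < sumn (map nleaves cs))%N := ltn_ord x.
have lt_y : (y < sumn (map nleaves cs))%N := ltn_ord y.
have /andP [lt_i _] := locate_bounded SLeaf lt_x.
rewrite /Uentry -[x == y]/(x == y :> nat) -(eq_locate lt_x lt_y).
rewrite treeAdj_node deg_node // /child_entry /coupling /Uentry.
have [e_ij|_] := eqVneq (loc cs x).1 (loc cs y).1; last first.
  by rewrite /= ?mulr0n ?mul0r !(rmorphB, rmorphD, rmorphM, rmorph_nat) rmorph0; ring.
rewrite -e_ij; have [_ ->] := wf_node_graph wf lt_i lt_i; rewrite natrD.
by case: (_ == _); rewrite ?mulr1n ?mulr0n ?mul1r ?mul0r
  !(rmorphB, rmorphD, rmorphM, rmorph_nat) ?rmorph0 ?rmorph1; ring.
Qed.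

Lemma det_charmx_node h cs (c : R) : wf_stree (SNode h cs) ->
  \det (charmxT (SNode h cs) (xF R - cst c))
  = (\prod_(i < size cs)
       (\det (charmxT (nth SLeaf cs i) (xF R - cst (c + delta * (Nchild h cs i)%:R)))
        * GammaT (nth SLeaf cs i) (xF R - cst (c + delta * (Nchild h cs i)%:R))))
    * \det (UGam alpha beta gamma delta (SNode h cs) (xF R - cst c)).
Proof.
move=> wf; set z := xF R - cst c.
have blockE i : blockmx SLeaf nleaves cs (child_entry h cs z) i
              = charmxT (nth SLeaf cs i) (xF R - cst (c + delta * (Nchild h cs i)%:R)).
  by rewrite charmxE sub_cstD; apply/matrixP => a b; rewrite !mxE.
have GammaE i : blockGamma SLeaf nleaves cs (child_entry h cs z) i
              = GammaT (nth SLeaf cs i) (xF R - cst (c + delta * (Nchild h cs i)%:R)).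
  by rewrite /blockGamma blockE.
have -> : UGam alpha beta gamma delta (SNode h cs) z
    = \matrix_(i, j) ((i == j)%:R / blockGamma SLeaf nleaves cs (child_entry h cs z) i
                      - coupling h i j).
  apply/matrixP => i j; rewrite !mxE GammaE -sub_cstD /coupling -[(i == j :> nat)]/(i == j).
  have -> : - alpha * (h i j)%:R + gamma * (i == j)%:R - gamma
          = - (alpha * (h i j)%:R + gamma - gamma * (i == j)%:R) by ring.
  by rewrite rmorphN addrC.
under [in RHS]eq_bigr => i _ do rewrite -blockE -GammaE.
rewrite charmx_node // (det_blkmx_sub_incmx (x0 := SLeaf) (sz := nleaves)) // => i.
  by rewrite blockE; apply: charmx_unit.
by rewrite GammaE; apply/GammaAt_neq0/nleaves_gt0/(wf_child wf (ltn_ord i)).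
Qed.


Definition vertex_factor (t : stree) (w : seq nat) (z : FF) : FF :=
  GammaT (subtreeAt t w) (z - cst (delta * (Npath t w)%:R))
  * \det (UGam alpha beta gamma delta (subtreeAt t w) (z - cst (delta * (Npath t w)%:R))).

Lemma vertex_factor_cons h cs i w z :
  vertex_factor (SNode h cs) (i :: w) z
  = vertex_factor (nth SLeaf cs i) w (z - cst (delta * (Nchild h cs i)%:R)).
Proof. by rewrite /vertex_factor /= natrD mulrDr sub_cstD. Qed.

Lemma vertex_factor_root t z :
  vertex_factor t [::] z = GammaT t z * \det (UGam alpha beta gamma delta t z).
Proof. by rewrite /vertex_factor [subtreeAt _ _]/= [Npath _ _]/= mulr0 rmorph0 subr0. Qed.

Definition tree_product (t : stree) (z : FF) : FF :=
  \prod_(w <- ipaths t) vertex_factor t w z.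

Lemma tree_product_node h cs z :
  tree_product (SNode h cs) z
  = vertex_factor (SNode h cs) [::] z
    * \prod_(i < size cs) tree_product (nth SLeaf cs i) (z - cst (delta * (Nchild h cs i)%:R)).
Proof.
rewrite /tree_product big_ipaths_node; apply: congr1.
apply: eq_bigr => i _; apply: eq_bigr => w _; exact: vertex_factor_cons.
Qed.

Lemma det_charmx_leaf (z : FF) :
  charmxT SLeaf z \in unitmx -> \det (charmxT SLeaf z) * GammaT SLeaf z = 1.
Proof.
move=> /mulmxV /matrixP /(_ 0 0); rewrite !mxE big_ord1 => inv1.
by rewrite det_mx11 /GammaAt !big_ord1.
Qed.

Lemma det_charmx_mul_GammaAt t (c : R) : wf_stree t ->
  \det (charmxT t (xF R - cst c)) * GammaT t (xF R - cst c) = tree_product t (xF R - cst c).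
Proof.
elim/stree_nth_ind: t c => [|h cs IH] c wf.
  by rewrite det_charmx_leaf ?charmx_unit // /tree_product big_nil.
rewrite det_charmx_node // tree_product_node vertex_factor_root mulrC mulrA.
under eq_bigr => i _ do rewrite IH ?(wf_child wf) // sub_cstD.
by rewrite mulrAC.
Qed.

Lemma det_charmx_factor h cs : wf_stree (SNode h cs) ->
  \det (charmxT (SNode h cs) (xF R))
  = (\prod_(w <- ipaths (SNode h cs) | w != [::]) vertex_factor (SNode h cs) w (xF R))
    * \det (UGam alpha beta gamma delta (SNode h cs) (xF R)).
Proof.
move=> wf; have := det_charmx_node 0 wf; rewrite rmorph0 subr0 => ->.
rewrite big_ipaths_node -[X in _ = X * _ * _]/1 mul1r.
apply: (congr1 (fun p => p * \det (UGam alpha beta gamma delta (SNode h cs) (xF R)))).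
apply: eq_bigr => i _; rewrite add0r (det_charmx_mul_GammaAt _ (wf_child wf (ltn_ord i))).
by apply: eq_big => [//|w _]; rewrite vertex_factor_cons.
Qed.

End TreeMatrices.

Unset Implicit Arguments.
Theorem mainTheorem11 (R : realFieldType) (alpha beta gamma delta : R)
  (T : stree) :
  alpha != 0 -> wf_stree T -> (2 <= nleaves T)%N ->
  tof (Phi alpha beta gamma delta (nleaves T) (treeAdj T)) =
    (\prod_(w <- ipaths T | w != [::])
       (GammaAt alpha beta gamma delta (nleaves (subtreeAt T w)) (treeAdj (subtreeAt T w))
                (xF R - cst (delta * (Npath T w)%:R))
        * \det (UGam alpha beta gamma delta (subtreeAt T w)
                     (xF R - cst (delta * (Npath T w)%:R)))))
    * \det (UGam alpha beta gamma delta T (xF R)).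
Proof.
move=> _; case: T => [//|h cs] wf _.
rewrite Phi_det_charmx; exact: det_charmx_factor.
Qed.
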